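(* Let $\mathscr{Y}\in\mathbb{R}^{m\times1\times n_3}$ and $\mathscr{V}\in\mathbb{R}^{n\times ms\times n_3}$ be such that $\mathscr{V}^T\diamondsuit\mathscr{V}=\mathscr{I}_{mmn_3}$. Then $\|\mathscr{V}\star(\mathscr{Y}\circledast\mathscr{I}_{ssn_3})\|_F=\|\mathscr{Y}\|_{T_{\ell_2}}$.
   Context: All tensors are real third-order arrays; $\|\cdot\|_F$ is the Frobenius norm (square root of the sum of squares of all entries). $\widehat{\mathscr{A}}=\mathscr{A}\times_3F_{n_3}$ denotes the tensor obtained by applying the discrete Fourier transform ($F_{n_3}$ with entries $\omega^{(i-1)(j-1)}$, $\omega=e^{-2\pi\mathrm{i}/n_3}$) to each tube; its frontal slices $\hat A^{(k)}$ are the Fourier slices. T-product: $\mathscr{A}\star\mathscr{B}$ has Fourier slices $\hat A^{(k)}\hat B^{(k)}$. Transpose $\mathscr{A}^T$: transpose each frontal slice and reverse the order of frontal slices $2,\dots,n_3$. $\mathscr{I}_{nnn_3}$: first frontal slice $I_n$, others zero. T-Kronecker product $\mathscr{A}\circledast\mathscr{B}$: Fourier slices $\hat A^{(k)}\otimes\hat B^{(k)}$. T-trace: the tube in $\mathbb{R}^{1\times1\times n_3}$ whose $k$-th Fourier slice is the trace of the $k$-th Fourier slice. Tubal inner product $\langle\mathscr{X},\mathscr{Y}\rangle_T=\text{T-trace}(\mathscr{X}^T\star\mathscr{Y})$. T-diamond product: for $\mathscr{V}=[\mathscr{V}_1,\dots,\mathscr{V}_m]$ with blocks $\mathscr{V}_i\in\mathbb{R}^{n\times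 s\times n_3}$, $\mathscr{V}^T\diamondsuit\mathscr{V}\in\mathbb{R}^{m\times m\times n_3}$ has $(i,j)$ tube $\langle\mathscr{V}_i,\mathscr{V}_j\rangle_T$. T-$\ell_2$ norm of $\mathscr{Y}\in\mathbb{R}^{m\times1\times n_3}$: $\|\mathscr{Y}\|_{T_{\ell_2}}=\frac{1}{\sqrt{n_3}}\big(\sum_{k=1}^{n_3}\|\hat Y^{(k)}\|_2^2\big)^{1/2}$, where $\hat Y^{(k)}\in\mathbb{C}^m$ are the Fourier slices. *)

From HB Require Import structures.
From mathcomp Require Import all_boot all_order all_algebra.
From mathcomp Require Import complex mxtens.
From mathcomp Require Import reals trigo.
Set Implicit Arguments. Unset Strict Implicit. Unset Printing Implicit Defensive.
Import Order.TTheory GRing.Theory Num.Theory.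
Local Open Scope ring_scope.

Section Tensors.
Variable R : realType.

(* A real third-order tensor in R^{n1 x n2 x n3}, given by its frontal
   slices (0-indexed: slice k : 'I_n3 is the (k+1)-th frontal slice). *)
Definition tensor (n1 n2 n3 : nat) := 'I_n3 -> 'M[R]_(n1, n2).

Definition omega (n3 : nat) : R[i] :=
  Complex (cos (2 * pi / n3%:R)) (- sin (2 * pi / n3%:R)).

Definition fslice {n1 n2 n3} (A : tensor n1 n2 n3) (k : 'I_n3)
  : 'M[R[i]]_(n1, n2) :=
  \sum_(j < n3) (omega n3 ^+ (k * j)) *: map_mx (fun x : R => (x%:C)%C) (A j).

(* The (real) tensor whose Fourier slices are F : inverse DFT along tubes.
   (Real part taken to land in real tensors; all uses below have
   conjugate-symmetric Fourier slices so the inverse DFT is already real.) *)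
Definition of_fslices {n1 n2 n3} (F : 'I_n3 -> 'M[R[i]]_(n1, n2))
  : tensor n1 n2 n3 :=
  fun j => map_mx (fun z : R[i] => complex.Re z)
    ((n3%:R)^-1 *: \sum_(k < n3) ((omega n3 ^+ (k * j))^-1 *: F k)).

Definition tprod {n1 n2 n4 n3} (A : tensor n1 n2 n3) (B : tensor n2 n4 n3)
  : tensor n1 n4 n3 :=
  of_fslices (fun k => fslice A k *m fslice B k).

Lemma negord_proof n (k : 'I_n) : ((n - k) %% n < n)%N.
Proof. by rewrite ltn_pmod // (leq_ltn_trans (leq0n k) (ltn_ord k)). Qed.
Definition negord {n} (k : 'I_n) : 'I_n := Ordinal (negord_proof k).

(* Transpose: transpose each frontal slice, reverse the order of slices 2..n3 *)
Definition ttrans {n1 n2 n3} (A : tensor n1 n2 n3) : tensor n2 n1 n3 :=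
  fun k => (A (negord k))^T.

Definition tid (n n3 : nat) : tensor n n n3 :=
  fun k => if val k == 0%N then 1%:M else 0.

Definition tkron {m1 n1 m2 n2 n3} (A : tensor m1 n1 n3) (B : tensor m2 n2 n3)
  : tensor (m1 * m2) (n1 * n2) n3 :=
  of_fslices (fun k => fslice A k *t fslice B k).

Definition ttrace {n n3} (X : tensor n n n3) : tensor 1 1 n3 :=
  of_fslices (fun k => (\tr (fslice X k))%:M).

Definition tinner {n1 n2 n3} (X Y : tensor n1 n2 n3) : tensor 1 1 n3 :=
  ttrace (tprod (ttrans X) Y).

(* i-th lateral block V_i in R^{n x s x n3} of V = [V_1, ..., V_m] *)
Definition tblock {n m s n3} (V : tensor n (m * s) n3) (i : 'I_m)
  : tensor n s n3 :=
  fun k => \matrix_(a, b) V k a (mxtens_index (i, b)).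

Definition tdiamond {n m s n3} (V : tensor n (m * s) n3) : tensor m m n3 :=
  fun k => \matrix_(i, j) tinner (tblock V i) (tblock V j) k 0 0.

Definition frob {n1 n2 n3} (A : tensor n1 n2 n3) : R :=
  Num.sqrt (\sum_(k < n3) \sum_(a < n1) \sum_(b < n2) A k a b ^+ 2).

Definition tl2 {m n3} (Y : tensor m 1 n3) : R :=
  (Num.sqrt n3%:R)^-1 *
  Num.sqrt (\sum_(k < n3) \sum_(a < m) Normc.normc (fslice Y k a 0) ^+ 2).

End Tensors.

From HB Require Import structures.
From mathcomp Require Import all_boot all_order all_algebra.
From mathcomp Require Import complex mxtens.
From mathcomp Require Import reals trigo.
From mathcomp Require Import ring lra zify.
Set Implicit Arguments.
Unset Strict Implicit.
Unset Printing Implicit Defensive.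
Import Order.TTheory GRing.Theory Num.Theory.
Local Open Scope ring_scope.

(* Work one Fourier slice at a time.  Since omega is a primitive n3-th root
   of unity, the DFT along tubes inverts [of_fslices] on conjugate-symmetric
   families (which the Fourier slices of real tensors are) and satisfies
   Parseval's identity n3 ||A||_F^2 = sum_k ||hat A^(k)||_F^2.  Hence Fourier
   slices turn T-products, T-Kronecker products, T-transposes and T-traces into
   the corresponding matrix operations, and V^T <> V = I says that in every
   slice the blocks hat V_i^(k) are orthonormal for the Frobenius inner product.
   The k-th slice of V ⋆ (Y ⊛ I) is sum_i hat Y_i^(k) hat V_i^(k), whose squared
   norm is sum_i |hat Y_i^(k)|^2 by Pythagoras; summing over k and applying
   Parseval gives the claim. *)

Lemma negordK n : involutive (@negord n).
Proof.
move=> [k lt_kn]; apply: val_inj => /=.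
case: k lt_kn => [|k] lt_kn; first by rewrite subn0 modnn subn0 modnn.
by rewrite (@modn_small (n - k.+1)) ?subKn ?modn_small //; lia.
Qed.

Lemma negord_inj n : injective (@negord n).
Proof. exact: inv_inj (@negordK n). Qed.

Lemma sum_mxtens_index (V : nmodType) m s (F : 'I_(m * s) -> V) :
  \sum_(c < m * s) F c = \sum_(i < m) \sum_(b < s) F (mxtens_index (i, b)).
Proof.
rewrite pair_big (reindex (@mxtens_index m s)) /=; last first.
  by exists (@mxtens_unindex m s) => c _; rewrite (mxtens_indexK, mxtens_unindexK).
by apply: eq_bigr => -[i b].
Qed.

Lemma mulmx_tens1E (R : comPzRingType) n m s (P : 'M[R]_(n, m * s))
    (y : 'M[R]_(m, 1)) a (b : 'I_s) :
  (P *m (y *t 1%:M)) a (mxtens_index (ord0, b))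
  = \sum_(i < m) y i 0 * P a (mxtens_index (i, b)).
Proof.
rewrite mxE sum_mxtens_index; apply: eq_bigr => i _.
rewrite (bigD1 b) //= big1 => [|b' /negbTE nb'b]; last first.
  by rewrite tensmxE mxE nb'b mulr0 mulr0.
by rewrite tensmxE mxE eqxx mulr1 mulrC addr0.
Qed.

Lemma sum_expr_unity_root (F : fieldType) n (z : F) :
  z ^+ n = 1 -> \sum_(j < n) z ^+ j = if z == 1 then n%:R else 0.
Proof.
case: eqP => [-> _ | /eqP z_neq1 zn1].
  by under eq_bigr do rewrite expr1n; rewrite sumr_const card_ord.
apply/eqP; move: (subrX1 z n); rewrite zn1 subrr => /esym/eqP.
by rewrite mulf_eq0 subr_eq0 (negbTE z_neq1).
Qed.

Section PrimitiveRoot.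
Variables (F : fieldType) (n : nat) (z : F).
Hypothesis z_prim : n.-primitive_root z.

Let z_neq0 : z != 0.
Proof. by rewrite (prim_root_eq0 z_prim) -lt0n (prim_order_gt0 z_prim). Qed.

Lemma prim_root_orthogonal (i j : 'I_n) :
  \sum_(k < n) z ^+ (i * k) / z ^+ (j * k) = if i == j then n%:R else 0.
Proof.
have -> : \sum_(k < n) z ^+ (i * k) / z ^+ (j * k)
          = \sum_(k < n) (z ^+ i / z ^+ j) ^+ k.
  by apply: eq_bigr => k _; rewrite exprMn exprVn -!exprM.
rewrite (@sum_expr_unity_root _ _ (z ^+ i / z ^+ j)); last first.
  rewrite exprMn exprVn -!exprM !(mulnC _ n) !exprM (prim_expr_order z_prim).
  by rewrite !expr1n invr1 mulr1.
have zj_neq0 : z ^+ j != 0 by rewrite expf_neq0.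
rewrite -(inj_eq (mulIf zj_neq0)) divfK // mul1r (eq_prim_root_expr z_prim).
by rewrite !modn_small.
Qed.

Lemma prim_expr_negord (k : 'I_n) j : z ^+ (negord k * j) = (z ^+ (k * j))^-1.
Proof.
rewrite !exprM /= (prim_expr_mod z_prim) -exprVn; congr (_ ^+ j).
apply: (mulIf (expf_neq0 k z_neq0)); rewrite mulVf ?expf_neq0 // -exprD subnK.
  exact: prim_expr_order.
exact: ltnW.
Qed.

Definition dft (x : 'I_n -> F) (k : 'I_n) : F := \sum_(j < n) z ^+ (k * j) * x j.

Definition idft (f : 'I_n -> F) (j : 'I_n) : F :=
  n%:R^-1 * \sum_(k < n) (z ^+ (k * j))^-1 * f k.

Lemma dft_idft f k : dft (idft f) k = f k.
Proof.
rewrite /dft /idft; under eq_bigr do rewrite mulrCA mulr_sumr.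
rewrite -mulr_sumr exchange_big /=.
under eq_bigr => l _.
  rewrite (_ : \sum_(j < n) _ = (if k == l then n%:R else 0) * f l); last first.
    rewrite -prim_root_orthogonal mulr_suml; apply: eq_bigr => j _.
    by rewrite mulrA (mulnC k) (mulnC l).
  over.
rewrite (bigD1 k) //= eqxx big1 ?addr0 => [|l /negbTE kl].
  by rewrite mulKf // (prim_root_natf_neq0 z_prim).
by rewrite eq_sym kl mul0r.
Qed.

Lemma dft_negord x k : dft (fun j => x (negord j)) k = dft x (negord k).
Proof.
rewrite /dft (reindex_inj (@negord_inj n)); apply: eq_bigr => j _.
by rewrite negordK mulnC !prim_expr_negord mulnC.
Qed.

End PrimitiveRoot.

(* [ring_scope] is reopened on top of [complex_scope] so that [x^*] denotes
   [Num.conj], to which the generic rmorphism lemmas apply. *)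
Local Open Scope complex_scope.
Local Open Scope ring_scope.

Lemma conjC_real_complex (R : rcfType) (x : R) : (x%:C)^* = x%:C.
Proof. exact: conjc_real. Qed.

Lemma normcK (R : rcfType) (z : R[i]) : (Normc.normc z ^+ 2)%:C = z^* * z.
Proof.
case: z => a b; rewrite /Normc.normc sqr_sqrtr ?addr_ge0 ?sqr_ge0 //.
by apply/eqP; rewrite eq_complex /=; apply/andP; split; apply/eqP; ring.
Qed.

Lemma sum_sqr_normc_orthonormal (R : rcfType) (T : finType) m
    (u : 'I_m -> T -> R[i]) (c : 'I_m -> R[i]) :
  (forall i j, \sum_t (u i t)^* * u j t = (i == j)%:R) ->
  \sum_t Normc.normc (\sum_(i < m) c i * u i t) ^+ 2
  = \sum_(i < m) Normc.normc (c i) ^+ 2.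
Proof.
move=> u_orthonormal; apply: complexI; rewrite !rmorph_sum /=.
have expand t : (Normc.normc (\sum_(i < m) c i * u i t) ^+ 2)%:C
    = \sum_(i < m) \sum_(j < m) (c i)^* * c j * ((u i t)^* * u j t).
  rewrite normcK rmorph_sum mulr_suml; apply: eq_bigr => i _.
  by rewrite mulr_sumr; apply: eq_bigr => j _; rewrite rmorphM; ring.
under eq_bigr do rewrite expand.
rewrite exchange_big; apply: eq_bigr => i _ /=; rewrite exchange_big /=.
under eq_bigr do rewrite -mulr_sumr u_orthonormal.
rewrite (bigD1 i) //= eqxx mulr1 big1 ?addr0 ?normcK // => j /negbTE ij.
by rewrite eq_sym ij mulr0.
Qed.

Section DiscreteFourier.
Variables (R : realType) (n : nat).
Local Notation w := (omega R n).
Local Notation theta := (2 * pi / n%:R : R).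

Lemma omega_exprE d :
  w ^+ d = Complex (cos (d%:R * theta)) (- sin (d%:R * theta)).
Proof.
rewrite /omega; move: theta => t.
elim: d => [|d IHd]; first by rewrite expr0 mul0r cos0 sin0 oppr0.
rewrite exprSr IHd -[(_ +i* _) * (_ +i* _)]/(_ +i* _) -natr1 mulrDl mul1r.
by rewrite cosD sinD; congr Complex; ring.
Qed.

Lemma conjC_omega_expr k : (w ^+ k)^* = (w ^+ k)^-1.
Proof.
apply/esym/mulr1_eq; rewrite rmorphXn -exprMn.
suff -> : w * w^* = 1 by rewrite expr1n.
rewrite /omega -[(_ +i* _) * (_ +i* _)]/(_ +i* _) !opprK !mulNr opprK.
by rewrite -!expr2 cos2Dsin2 (mulrC (cos _)) subrr.
Qed.

Lemma omega_expr_neq1 d : (0 < d)%N -> (d < n)%N -> w ^+ d != 1.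
Proof.
move=> d_gt0 lt_dn; apply/eqP => /(congr1 (@complex.Re R)); rewrite omega_exprE /=.
have n_pos : 0 < n%:R :> R by rewrite ltr0n (leq_ltn_trans _ lt_dn).
(* Re (w ^+ d) = cos (2 y) = 1 - 2 sin y ^+ 2 with 0 < y < pi. *)
pose y : R := d%:R * pi / n%:R.
have -> : d%:R * theta = y *+ 2 by rewrite /y -mulr_natl; field; rewrite gt_eqF.
have y_range : 0 < y < pi.
  rewrite divr_gt0 // ?mulr_gt0 ?ltr0n ?pi_gt0 //=.
  by rewrite ltr_pdivrMr // mulrC ltr_pM2l ?pi_gt0 // ltr_nat.
rewrite cos_mulr2n cos2sin2 => cos_eq1.
have /eqP : sin y ^+ 2 = 0 by move: cos_eq1; rewrite mulr2n; lra.
rewrite expf_eq0 /= => /eqP sin_eq0.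
by move: (sin_gt0_pi y_range); rewrite sin_eq0 ltxx.
Qed.

Lemma omega_prim_root : (0 < n)%N -> n.-primitive_root w.
Proof.
move=> n_gt0; apply/andP; split => //; apply/forallP => i; rewrite unity_rootE.
apply/eqP; have [-> | i_neq_n] := eqVneq i.+1 n.
  have n_neq0 : n%:R != 0 :> R by rewrite pnatr_eq0 -lt0n.
  by rewrite omega_exprE mulrC divfK // mulr_natl cos2pi sin2pi oppr0 eqxx.
by apply/negbTE/omega_expr_neq1; rewrite // ltn_neqAle i_neq_n ltn_ord.
Qed.

Hypothesis n_gt0 : (0 < n)%N.
Let w_prim := omega_prim_root n_gt0.

Lemma dft_parseval (x y : 'I_n -> R[i]) :
  \sum_(k < n) (dft w x k)^* * dft w y k = n%:R * \sum_(j < n) (x j)^* * y j.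
Proof.
have expand k : (dft w x k)^* * dft w y k
    = \sum_(j < n) \sum_(l < n) (x j)^* * y l * (w ^+ (l * k) / w ^+ (j * k)).
  rewrite /dft rmorph_sum mulr_suml; apply: eq_bigr => j _.
  rewrite mulr_sumr; apply: eq_bigr => l _.
  by rewrite rmorphM /= conjC_omega_expr (mulnC j) (mulnC l); ring.
under eq_bigr do rewrite expand.
rewrite exchange_big mulr_sumr; apply: eq_bigr => j _ /=; rewrite exchange_big /=.
under eq_bigr do rewrite -mulr_sumr (prim_root_orthogonal w_prim).
rewrite (bigD1 j) //= eqxx big1 ?addr0 => [|l /negbTE lj]; first by rewrite mulrC.
by rewrite lj mulr0.
Qed.

Lemma conjC_dft_real (x : 'I_n -> R) k :
  (dft w (fun j => (x j)%:C) k)^* = dft w (fun j => (x j)%:C) (negord k).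
Proof.
rewrite rmorph_sum; apply: eq_bigr => j _.
rewrite rmorphM /= conjC_real_complex conjC_omega_expr.
by rewrite (prim_expr_negord w_prim).
Qed.

Lemma conjC_idft (f : 'I_n -> R[i]) :
  (forall k, f (negord k) = (f k)^*) -> forall j, (idft w f j)^* = idft w f j.
Proof.
move=> f_sym j; rewrite rmorphM /= fmorphV rmorph_nat rmorph_sum /=; congr (_ * _).
rewrite [RHS](reindex_inj (@negord_inj n)); apply: eq_bigr => k _.
rewrite rmorphM /= fmorphV /= conjC_omega_expr f_sym.
by rewrite (prim_expr_negord w_prim) !invrK.
Qed.

Definition conj_symmetric n1 n2 (F : 'I_n -> 'M[R[i]]_(n1, n2)) :=
  forall k a b, F (negord k) a b = (F k a b)^*.

Lemma fsliceE n1 n2 (A : tensor R n1 n2 n) k a b :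
  fslice A k a b = dft w (fun j => (A j a b)%:C) k.
Proof. by rewrite /fslice summxE; apply: eq_bigr => j _; rewrite !mxE. Qed.

Lemma of_fslicesE n1 n2 (F : 'I_n -> 'M[R[i]]_(n1, n2)) j a b :
  of_fslices F j a b = complex.Re (idft w (fun k => F k a b) j).
Proof.
rewrite /of_fslices !mxE summxE; congr (complex.Re (_ * _)).
by apply: eq_bigr => k _; rewrite !mxE.
Qed.

Lemma fslice_of_fslices n1 n2 (F : 'I_n -> 'M[R[i]]_(n1, n2)) :
  conj_symmetric F -> forall k, fslice (of_fslices F) k = F k.
Proof.
move=> F_sym k; apply/matrixP => a b.
rewrite fsliceE -(dft_idft w_prim (fun l => F l a b)) /dft; apply: eq_bigr => j _.
rewrite of_fslicesE RRe_real // CrealE; apply/eqP.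
by apply: conjC_idft => l; apply: F_sym.
Qed.

Lemma conj_symmetric_fslice n1 n2 (A : tensor R n1 n2 n) :
  conj_symmetric (fslice A).
Proof. by move=> k a b; rewrite !fsliceE conjC_dft_real. Qed.

Lemma conj_symmetric_mul n1 n2 n4
    (F : 'I_n -> 'M[R[i]]_(n1, n2)) (G : 'I_n -> 'M_(n2, n4)) :
  conj_symmetric F -> conj_symmetric G -> conj_symmetric (fun k => F k *m G k).
Proof.
move=> F_sym G_sym k a b; rewrite !mxE rmorph_sum; apply: eq_bigr => c _.
by rewrite rmorphM F_sym G_sym.
Qed.

Lemma conj_symmetric_tens m1 n1 m2 n2
    (F : 'I_n -> 'M[R[i]]_(m1, n1)) (G : 'I_n -> 'M_(m2, n2)) :
  conj_symmetric F -> conj_symmetric G -> conj_symmetric (fun k => F k *t G k).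
Proof. by move=> F_sym G_sym k a b; rewrite !mxE rmorphM F_sym G_sym. Qed.

Lemma conj_symmetric_trace n1 (F : 'I_n -> 'M[R[i]]_n1) :
  conj_symmetric F -> conj_symmetric (fun k => (\tr (F k))%:M : 'M_1).
Proof.
move=> F_sym k a b; rewrite !mxE rmorphMn rmorph_sum; congr (_ *+ _).
by apply: eq_bigr => c _; rewrite F_sym.
Qed.

Lemma fslice_tprod n1 n2 n4 (A : tensor R n1 n2 n) (B : tensor R n2 n4 n) k :
  fslice (tprod A B) k = fslice A k *m fslice B k.
Proof.
apply: fslice_of_fslices.
by apply: conj_symmetric_mul; apply: conj_symmetric_fslice.
Qed.

Lemma fslice_tkron m1 n1 m2 n2 (A : tensor R m1 n1 n) (B : tensor R m2 n2 n) k :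
  fslice (tkron A B) k = fslice A k *t fslice B k.
Proof.
apply: fslice_of_fslices.
by apply: conj_symmetric_tens; apply: conj_symmetric_fslice.
Qed.

Lemma fslice_ttrace n1 (A : tensor R n1 n1 n) k :
  fslice (ttrace A) k = (\tr (fslice A k))%:M.
Proof.
apply: fslice_of_fslices.
by apply: conj_symmetric_trace; apply: conj_symmetric_fslice.
Qed.

Lemma fslice_ttrans n1 n2 (A : tensor R n1 n2 n) k :
  fslice (ttrans A) k = (map_mx Num.conj (fslice A k))^T.
Proof.
apply/matrixP => a b; rewrite !mxE -conj_symmetric_fslice !fsliceE -dft_negord //.
by apply: eq_bigr => j _; rewrite /ttrans mxE.
Qed.

Lemma fslice_tid n1 k : fslice (@tid R n1 n) k = 1%:M.
Proof.
apply/matrixP => a b; rewrite fsliceE /dft (bigD1 (Ordinal n_gt0)) //= big1 ?addr0.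
  by rewrite /tid /= muln0 expr0 mul1r !mxE; case: (a == b).
move=> j j_neq0; rewrite /tid ifF ?mxE ?mulr0 //.
by apply/negbTE; apply: contra j_neq0 => /eqP j0; apply/eqP/val_inj.
Qed.

Lemma frob_parseval n1 n2 (A : tensor R n1 n2 n) :
  n%:R * frob A ^+ 2
  = \sum_(k < n) \sum_(a < n1) \sum_(b < n2) Normc.normc (fslice A k a b) ^+ 2.
Proof.
rewrite /frob sqr_sqrtr; last by do 3!(apply: sumr_ge0 => ? _); apply: sqr_ge0.
rewrite exchange_big /= [RHS]exchange_big /= mulr_sumr; apply: eq_bigr => a _.
rewrite exchange_big /= [RHS]exchange_big /= mulr_sumr; apply: eq_bigr => b _.
apply: complexI; rewrite rmorphM rmorph_nat !rmorph_sum /=.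
under [RHS]eq_bigr do rewrite normcK fsliceE.
rewrite dft_parseval; congr (_ * _); apply: eq_bigr => j _.
by rewrite conjC_real_complex -rmorphM expr2.
Qed.

Lemma fslice_tblock n1 m s (V : tensor R n1 (m * s) n) i k a b :
  fslice (tblock V i) k a b = fslice V k a (mxtens_index (i, b)).
Proof. by rewrite !fsliceE; apply: eq_bigr => j _; rewrite /tblock mxE. Qed.

Lemma fslice_tdiamond n1 m s (V : tensor R n1 (m * s) n) k i j :
  fslice (tdiamond V) k i j
  = \sum_(t : 'I_n1 * 'I_s) (fslice V k t.1 (mxtens_index (i, t.2)))^*
                             * fslice V k t.1 (mxtens_index (j, t.2)).
Proof.
have -> : fslice (tdiamond V) k i j
          = fslice (tinner (tblock V i) (tblock V j)) k 0 0.
  by rewrite !fsliceE; apply: eq_bigr => l _; rewrite /tdiamond mxE.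
rewrite fslice_ttrace mxE eqxx mulr1n fslice_tprod fslice_ttrans.
rewrite /mxtrace; under eq_bigr do rewrite mxE.
rewrite exchange_big pair_big /=; apply: eq_bigr => -[a b] _ /=.
by rewrite !mxE !fslice_tblock.
Qed.

End DiscreteFourier.

Theorem proposition9 (R : realType) (m n s n3 : nat)
  (Y : tensor R m 1 n3) (V : tensor R n (m * s) n3) :
  tdiamond V = @tid R m n3 ->
  frob (tprod V (tkron Y (@tid R s n3))) = tl2 Y.
Proof.
move=> VTV; have [n3_eq0 | n3_gt0] := posnP n3.
  by subst n3; rewrite /frob /tl2 !big_ord0 sqrtr0 mulr0.
set X := tprod V (tkron Y (@tid R s n3)).
have blocks_orthonormal k (i j : 'I_m) :
    \sum_(t : 'I_n * 'I_s) (fslice V k t.1 (mxtens_index (i, t.2)))^*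
                           * fslice V k t.1 (mxtens_index (j, t.2)) = (i == j)%:R.
  by rewrite -fslice_tdiamond // VTV fslice_tid // mxE.
have slice_norm k :
    \sum_(a < n) \sum_(b < 1 * s) Normc.normc (fslice X k a b) ^+ 2
    = \sum_(i < m) Normc.normc (fslice Y k i 0) ^+ 2.
  rewrite fslice_tprod // fslice_tkron // fslice_tid //.
  under eq_bigr do rewrite sum_mxtens_index big_ord1.
  under eq_bigr do under eq_bigr do rewrite mulmx_tens1E.
  by rewrite pair_big /=; apply: sum_sqr_normc_orthonormal.
have parseval_X := frob_parseval n3_gt0 X.
rewrite (eq_bigr _ (fun k _ => slice_norm k)) in parseval_X.
have sqrt_n3_neq0 : Num.sqrt (n3%:R : R) != 0 by rewrite sqrtr_eq0 -ltNge ltr0n.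
rewrite /tl2 -parseval_X sqrtrM ?ler0n // sqrtr_sqr ger0_norm ?sqrtr_ge0 //.
by rewrite mulKf.
Qed.
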